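(* Let $M\in\{0,1\}^{m\times n}$ be the incidence matrix of a simple graph, let $c\in\mathbb Z^n$, and let $r\in\mathbb Z^m$. Let $z^{(1)},\dots,z^{(\ell)}\in\mathbb Z^m$ with $z^{(k)}\equiv r\pmod 2$ for all $k$. Let $\lambda^{(1)},\dots,\lambda^{(\ell)}\ge0$ be reals with $\sum_k\lambda^{(k)}=1$, and suppose $z:=\sum_k\lambda^{(k)}z^{(k)}$ is an integer vector with $z\equiv r\pmod2$. Then \[ f_{c,M}(z)\le\sum_{k\in[\ell]}\lambda^{(k)}f_{c,M}(z^{(k)}). \]
   Context: $f_{c,M}(z)=\min\{c^\top x\mid Mx=z,\ x\in\mathbb Z^n_{\ge0}\}$, with value $\infty$ if infeasible. This is the minimum cost of a perfect $z$-matching of the graph. Congruence modulo $2$ of vectors is componentwise. *)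

From HB Require Import structures.
From mathcomp Require Import all_boot all_order all_algebra.
From mathcomp Require Import all_classical all_reals ereal.
Set Implicit Arguments. Unset Strict Implicit. Unset Printing Implicit Defensive.
Import Order.TTheory GRing.Theory Num.Theory.
Local Open Scope ring_scope.

(* M (m rows = vertices, n columns = edges) is the vertex-edge incidence
   matrix of a simple graph: 0/1 entries, every column has exactly two ones
   (an edge has two distinct endpoints), and no two columns coincide
   (no parallel edges). *)
Definition is_simple_incidence_matrix (m n : nat) (M : 'M[int]_(m, n)) : Prop :=
  (forall i j, M i j = 0 \/ M i j = 1) /\
  (forall j, \sum_(i < m) M i j = 2) /\
  (forall j j', j != j' -> col j M != col j' M).

(* Written as an infimum in the extended reals (the feasible set is finite
   for an incidence matrix, so the infimum is the minimum; inf of the empty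
   set is +oo). *)
Definition fcM (R : realType) (m n : nat) (c : 'cV[int]_n) (M : 'M[int]_(m, n))
  (z : 'cV[int]_m) : \bar R :=
  ereal_inf [set ((((c^T *m x) 0 0)%:~R : R)%:E) | x in
     [set x : 'cV[int]_n | M *m x = z /\ (forall j, 0 <= x j 0)]]%classic.

From mathcomp Require Import all_boot all_order all_algebra.
From mathcomp Require Import all_classical all_reals ereal.
From mathcomp Require Import zify ring lra.
Import Order.TTheory GRing.Theory Num.Theory.
Local Open Scope ring_scope.
Set Implicit Arguments. Unset Strict Implicit. Unset Printing Implicit Defensive.

(* Choose optimal solutions x_k for the z_k; the weights lam then form a
   probability distribution on nonnegative integer solutions whose degrees are
   bounded and congruent to r mod 2, with mean degree vector z and mean cost
   sum_k lam_k f(z_k).  Among all such distributions take one minimising the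
   mean of |deg x - z|^2, which exists because this is a linear program over a
   finite set.  If the minimum were positive, the support would contain a and b
   with deg b i < z i < deg a i.  As deg a - deg b is even, the multigraph made
   of the edges of a with sign + and those of b with sign - contains an
   alternating closed walk through i; exchanging it between a and b gives a', b'
   with a' + b' = a + b whose degrees lie between those of a and b and move by 2
   at i, which strictly decreases the objective.  Hence some solution in the
   support has degree vector z and cost at most the mean. *)

Lemma sum_gt0_witness (R : realDomainType) (I : finType) (P : pred I) (F : I -> R) :
  0 < \sum_(x | P x) F x -> exists2 x, P x & 0 < F x.
Proof.
move=> pos; apply: contrapT => noF; move: pos; rewrite ltNge sumr_le0 // => x Px.
by rewrite leNgt; apply/negP => Fx; apply: noF; exists x.
Qed.

Lemma mul_gt0_factors (R : realDomainType) (a x : R) :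
  0 <= a -> 0 < a * x -> 0 < a /\ 0 < x.
Proof.
move=> a_ge0 pos; have a_gt0 : 0 < a.
  by rewrite lt_def a_ge0 andbT; apply: contraTneq pos => ->; rewrite mul0r ltxx.
by split => //; rewrite -(pmulr_rgt0 _ a_gt0).
Qed.

Definition between (d s : int) := (0 <= d <= s) || (s <= d <= 0).

Lemma between0 s : between 0 s.
Proof. rewrite /between; lia. Qed.

Lemma between_trans x y z : between x y -> between y z -> between x z.
Proof. rewrite /between; lia. Qed.

Lemma between_subr d s : between d s -> between (s - d) s.
Proof. rewrite /between; lia. Qed.

Lemma between_addr x d s : between x (s - d) -> between d s -> between (x + d) s.
Proof. rewrite /between; lia. Qed.

Lemma sq_exchange_le (A B z d : int) : between d (A - B) ->
  (A - d - z) ^+ 2 + (B + d - z) ^+ 2 <= (A - z) ^+ 2 + (B - z) ^+ 2.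
Proof. by rewrite /between !expr2; nia. Qed.

Lemma sq_exchange_lt (A B z : int) : 2 <= A - z -> B - z <= -2 ->
  (A - 2 - z) ^+ 2 + (B + 2 - z) ^+ 2 < (A - z) ^+ 2 + (B - z) ^+ 2.
Proof. by rewrite !expr2; nia. Qed.

Lemma addr_swap_eq (V : zmodType) (a b a' b' : V) : a' + b' = a + b -> b' = b + (a - a').
Proof. by move=> sum_ab; rewrite addrA (addrC b) -sum_ab addrAC subrr add0r. Qed.

Lemma mulmxB_entry m n (M : 'M[int]_(m, n)) (x y : 'cV[int]_n) v :
  (M *m (x - y)) v ord0 = (M *m x) v ord0 - (M *m y) v ord0.
Proof. by rewrite mulmxBr !mxE. Qed.

Lemma mulmxD_entry m n (M : 'M[int]_(m, n)) (x y : 'cV[int]_n) v :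
  (M *m (x + y)) v ord0 = (M *m x) v ord0 + (M *m y) v ord0.
Proof. by rewrite mulmxDr !mxE. Qed.

Lemma weighted_esum_pinfty (R : realDomainType) (I : finType) (lam : I -> R)
    (f : I -> \bar R) :
  (forall k, 0 <= lam k) -> (forall k, f k != -oo%E) ->
  (exists2 k, 0 < lam k & f k = +oo%E) -> (\sum_k (lam k)%:E * f k)%E = +oo%E.
Proof.
move=> lam_ge0 f_fin [k lam_k f_k]; apply/eqP; rewrite esum_eqy => [|k' _].
  by apply/existsP; exists k; rewrite f_k mulry gtr0_sg // mul1e.
case: (f k') (f_fin k') => [x||] //= _.
have [->|lam_k'] := eqVneq (lam k') 0; first by rewrite mul0e.
by rewrite mulry gtr0_sg ?mul1e // lt_def lam_k' lam_ge0.
Qed.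

(** * Alternating walks in signed multigraphs *)

(* The label in X keeps parallel edges apart, so that an exchanged
   sub-multiset can be read back edge by edge. *)
Section SignedMultigraph.
Variables (V X : finType).

Local Notation stub := (V * bool)%type.
Local Notation edge := (X * (stub * stub))%type.
Local Notation multiset := {ffun edge -> int}.

Definition sgnz (b : bool) : int := if b then 1 else -1.

Lemma sgnz_sqr b : sgnz b * sgnz b = 1.
Proof. by case: b. Qed.

Lemma between_sgnz2 b S : 2 <= sgnz b * S -> between (sgnz b + sgnz b) S.
Proof. by case: b; rewrite /between /=; lia. Qed.

Definition stub_deg (t : stub) (v : V) : int := (t.1 == v)%:R * sgnz t.2.
Definition edge_deg (x : edge) (v : V) : int := stub_deg x.2.1 v + stub_deg x.2.2 v.

Definition has_stub (t : stub) (x : edge) := (x.2.1 == t) || (x.2.2 == t).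
Definition other_stub (t : stub) (x : edge) := if x.2.1 == t then x.2.2 else x.2.1.
Definition splice (t1 : stub) (e : edge) (t2 : stub) (f : edge) : edge :=
  (e.1, (other_stub t1 e, other_stub t2 f)).

Lemma edge_deg_other t x v :
  has_stub t x -> edge_deg x v = stub_deg t v + stub_deg (other_stub t x) v.
Proof.
by rewrite /has_stub /edge_deg /other_stub; case: eqP => [->|_] //= /eqP->; rewrite addrC.
Qed.

Lemma has_other_stub t x : has_stub t x -> has_stub (other_stub t x) x.
Proof. by rewrite /has_stub /other_stub; case: eqP => _; rewrite eqxx ?orbT. Qed.

Lemma edge_deg_splice t1 e t2 f v : has_stub t1 e -> has_stub t2 f ->
  edge_deg e v + edge_deg f v
  = edge_deg (splice t1 e t2 f) v + (stub_deg t1 v + stub_deg t2 v).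
Proof.
move=> /(edge_deg_other v)-> /(edge_deg_other v)->; rewrite /edge_deg /=; ring.
Qed.

Lemma stub_deg_pair_even (t1 t2 : stub) v :
  t1.1 = t2.1 -> (2 %| stub_deg t1 v + stub_deg t2 v)%Z.
Proof.
case: t1 t2 => [j a] [j' b] /= <-; rewrite /stub_deg /=.
by case: (j == v); case: a; case: b.
Qed.

Lemma edge_deg_mixed j x v :
  has_stub (j, true) x -> has_stub (j, false) x -> edge_deg x v = 0.
Proof.
case: x => l [[a sa] [b sb]]; rewrite /has_stub /edge_deg /stub_deg /= !xpair_eqE.
case: sa; case: sb; rewrite ?andbF ?andbT ?orbF //= => /eqP-> /eqP->; ring.
Qed.

Lemma edge_deg_stub x j : edge_deg x j != 0 -> exists b, has_stub (j, b) x.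
Proof.
case: x => l [[a sa] [b sb]]; rewrite /edge_deg /stub_deg /has_stub /=.
case: (eqVneq a j) => [->|_]; first by exists sa; rewrite eqxx.
case: (eqVneq b j) => [->|_]; first by exists sb; rewrite eqxx orbT.
by rewrite !mul0r addr0 eqxx.
Qed.

Definition mweight (F : edge -> int) (m : multiset) := \sum_x m x * F x.
Definition sdeg (m : multiset) (v : V) := mweight (edge_deg^~ v) m.
Definition msize (m : multiset) := mweight (fun=> 1) m.
Definition munit (e : edge) : multiset := [ffun x => (x == e)%:R].

Lemma mweightD F m m' : mweight F (m + m') = mweight F m + mweight F m'.
Proof. by rewrite /mweight -big_split; apply: eq_bigr => x _; rewrite ffunE mulrDl. Qed.

Lemma mweightN F m : mweight F (- m) = - mweight F m.
Proof. by rewrite /mweight -sumrN; apply: eq_bigr => x _; rewrite ffunE mulNr. Qed.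

Lemma mweight_unit F e : mweight F (munit e) = F e.
Proof.
rewrite /mweight (bigD1 e) //= ffunE eqxx mul1r big1 ?addr0 // => x /negbTE.
by rewrite ffunE => ->; rewrite mul0r.
Qed.

Definition mweightE := (mweightD, mweightN, mweight_unit).

Definition mixed_at (m : multiset) (j : V) := exists e f,
  [/\ 0 < m e, 0 < m f, has_stub (j, true) e & has_stub (j, false) f].

Definition contains_pair (m : multiset) e f := forall x, (x == e)%:R + (x == f)%:R <= m x.

Lemma contains_pair_pos (m : multiset) e f :
  (forall x, 0 <= m x) -> 0 < m e -> 0 < m f -> (e = f -> 2 <= m e) -> contains_pair m e f.
Proof.
move=> m_ge0 me mf ef x; have := m_ge0 x.
case: (eqVneq x e) => [->|_]; case: (eqVneq _ f) => [eq_f|_] /=; try lia.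
- by have := ef eq_f; lia.
- by rewrite eq_f; lia.
Qed.

Section PureVertex.
Variables (m : multiset) (j : V) (s : bool) (x : edge).
Hypotheses (pure : forall v, ~ mixed_at m v) (m_ge0 : forall y, 0 <= m y).
Hypotheses (mx : 0 < m x) (tx : has_stub (j, s) x).

Lemma pure_stub_sign y s' : 0 < m y -> has_stub (j, s') y -> s' = s.
Proof.
move=> my ty; case: s s' tx ty => [] [] // tx' ty; exfalso; apply: (@pure j).
  by exists x, y.
by exists y, x.
Qed.

Lemma pure_term_ge0 y : 0 <= m y * (sgnz s * edge_deg y j).
Proof.
have [->|my_neq0] := eqVneq (m y) 0; first by rewrite mul0r.
have my : 0 < m y by rewrite lt_def my_neq0 m_ge0.
have stub_ge0 u : has_stub u y -> 0 <= sgnz s * stub_deg u j.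
  case: u => v s' yu; rewrite /stub_deg /=.
  case: (eqVneq v j) => [vj|_]; last by rewrite mul0r mulr0.
  by rewrite vj in yu; rewrite (pure_stub_sign my yu); case: s.
rewrite mulr_ge0 ?(ltW my) // /edge_deg mulrDr addr_ge0 // stub_ge0 //.
  by rewrite /has_stub eqxx.
by rewrite /has_stub eqxx orbT.
Qed.

Lemma pure_sdeg_split : sgnz s * sdeg m j
  = m x * (sgnz s * edge_deg x j) + \sum_(y | y != x) m y * (sgnz s * edge_deg y j).
Proof.
rewrite /sdeg /mweight mulr_sumr (bigD1 x) //=.
by congr (_ + _); [ring | apply: eq_bigr => y _; ring].
Qed.

Lemma pure_sdeg_ge : m x * (sgnz s * edge_deg x j) <= sgnz s * sdeg m j.
Proof.
by rewrite pure_sdeg_split lerDl; apply: sumr_ge0 => y _; apply: pure_term_ge0.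
Qed.

Lemma second_stub : (other_stub (j, s) x).1 != j -> (2 %| sdeg m j)%Z ->
  exists f, [/\ has_stub (j, s) f, contains_pair m x f & 2 <= sgnz s * sdeg m j].
Proof.
move=> not_loop even_j.
have deg_x : sgnz s * edge_deg x j = 1.
  rewrite (edge_deg_other _ tx) /stub_deg /= eqxx (negbTE not_loop) mul0r addr0 mul1r.
  by case: s.
have rest_ge0 : 0 <= \sum_(y | y != x) m y * (sgnz s * edge_deg y j).
  by apply: sumr_ge0 => y _; apply: pure_term_ge0.
have split_j := pure_sdeg_split; rewrite deg_x mulr1 in split_j.
have [x2|x1] := leP 2 (m x).
  exists x; split=> //; last by lia.
  by apply: contains_pair_pos => // _.
have even_s : (2 %| sgnz s * sdeg m j)%Z by rewrite dvdz_mull.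
have rest_pos : 0 < \sum_(y | y != x) m y * (sgnz s * edge_deg y j) by lia.
have [y y_x pos_y] := sum_gt0_witness rest_pos.
have [my deg_y] := mul_gt0_factors (m_ge0 y) pos_y.
have [s' ty] : exists s', has_stub (j, s') y.
  by apply: edge_deg_stub; apply: contraTneq deg_y => ->; rewrite mulr0 ltxx.
move: (ty); rewrite (pure_stub_sign my ty) => {}ty.
exists y; split=> //; last by lia.
by apply: contains_pair_pos => // eq_y; move: y_x; rewrite eq_y eqxx.
Qed.

End PureVertex.

Variable i : V.

Definition admissible (m : multiset) :=
  [/\ forall x, 0 <= m x, forall v, (2 %| sdeg m v)%Z & 0 < sdeg m i].

(* The sub-multiset of [m] that gets exchanged between the two solutions. *)
Definition swap_part (m W : multiset) :=
  [/\ forall x, 0 <= W x <= m x, sdeg W i = 2 &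
      forall v, (2 %| sdeg W v)%Z && between (sdeg W v) (sdeg m v)].

Definition solvable_below (m : multiset) :=
  forall m', admissible m' -> msize m' < msize m -> exists W, swap_part m' W.

Lemma drop_step m e :
  admissible m -> 0 < m e -> edge_deg e i = 0 ->
  (forall v, (2 %| edge_deg e v)%Z && between (edge_deg e v) (sdeg m v)) ->
  solvable_below m -> exists W, swap_part m W.
Proof.
move=> [m_ge0 m_even m_i] me ei de IH.
have deg' v : sdeg (m - munit e) v = sdeg m v - edge_deg e v by rewrite /sdeg !mweightE.
have [W [W_le W_i W_v]] : exists W, swap_part (m - munit e) W.
  apply: IH; last by rewrite /msize !mweightE ltrBlDr ltrDl.
  split=> [x|v|]; rewrite ?deg' ?ei ?subr0 //.
    by rewrite !ffunE; have := m_ge0 x; case: eqP => [->|_] /=; move: me; lia.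
  by case/andP: (de v) => even_e _; rewrite rpredB.
exists W; split=> // [x|v].
  by have := W_le x; rewrite !ffunE; have := m_ge0 x; case: (_ == e) => /=; lia.
case/andP: (W_v v); rewrite deg' => -> /between_trans; apply.
by case/andP: (de v) => _ /between_subr.
Qed.

Lemma splice_step m e f t1 t2 :
  admissible m -> has_stub t1 e -> has_stub t2 f -> t1.1 = t2.1 ->
  contains_pair m e f -> stub_deg t1 i + stub_deg t2 i = 0 ->
  (forall v, between (stub_deg t1 v + stub_deg t2 v) (sdeg m v)) ->
  solvable_below m -> exists W, swap_part m W.
Proof.
move=> [m_ge0 m_even m_i] te tf t12 m_ef di dv IH.
set g := splice t1 e t2 f; set d := fun v => stub_deg t1 v + stub_deg t2 v.
set m' := m - munit e - munit f + munit g.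
have deg' v : sdeg m' v = sdeg m v - d v.
  by rewrite /sdeg !mweightE /d /=; move: (edge_deg_splice v te tf); rewrite -/g; lia.
have [W [W_le W_i W_v]] : exists W, swap_part m' W.
  apply: IH; last by rewrite /msize !mweightE; lia.
  split=> [x|v|]; rewrite ?deg' /d ?di ?subr0 //.
    rewrite !ffunE; have := m_ef x.
    by case: (x == e); case: (x == f); case: (x == g) => /=; lia.
  by rewrite rpredB // stub_deg_pair_even.
have W_ge0 x : 0 <= W x by case/andP: (W_le x).
(* Undo the splice on one copy of [g] if [W] uses it. *)
have [Wg0|Wg_pos] := leP (W g) 0.
  exists W; split=> // [x|v].
    have := W_le x; rewrite /m' !ffunE; have := m_ef x; have := m_ge0 x.
    by case: (eqVneq x g) => [->|_] /=; lia.
  case/andP: (W_v v); rewrite deg' => -> /between_trans; apply.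
  exact: between_subr (dv v).
have degW v : sdeg (W - munit g + munit e + munit f) v = sdeg W v + d v.
  by rewrite /sdeg !mweightE /d /=; move: (edge_deg_splice v te tf); rewrite -/g; lia.
exists (W - munit g + munit e + munit f); split=> [x||v]; rewrite ?degW.
- have := W_le x; rewrite /m' !ffunE; have := W_ge0 x.
  by case: (eqVneq x g) => [->|_] /=; lia.
- by rewrite W_i /d di addr0.
- case/andP: (W_v v); rewrite deg' => even_W between_W.
  by rewrite rpredD ?stub_deg_pair_even ?(between_addr between_W (dv v)).
Qed.

Lemma mixed_step m j :
  admissible m -> mixed_at m j -> solvable_below m -> exists W, swap_part m W.
Proof.
move=> adm [e [f [me mf te tf]]] IH; have [m_ge0 _ _] := adm.
have opposite v : stub_deg (j, true) v + stub_deg (j, false) v = 0.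
  by rewrite /stub_deg /=; case: (j == v); rewrite ?mul0r ?addr0 ?mul1r ?addrN.
have [eq_ef|ef] := eqVneq e f.
  rewrite -eq_ef in tf; apply: (drop_step adm me); rewrite ?(edge_deg_mixed _ te tf) // => v.
  by rewrite (edge_deg_mixed _ te tf) dvdz0 between0.
apply: (splice_step adm te tf) => // [x|v]; last by rewrite opposite between0.
by apply: contains_pair_pos => // eq_ef; rewrite eq_ef eqxx in ef.
Qed.

Lemma pure_step m x j s :
  admissible m -> (forall v, ~ mixed_at m v) -> 0 < m x -> has_stub (j, s) x ->
  j != i -> solvable_below m -> exists W, swap_part m W.
Proof.
move=> adm pure mx tx ji IH; have [m_ge0 m_even _] := adm.
set t := (j, s).
have t_i : stub_deg t i + stub_deg t i = 0 by rewrite /stub_deg (negbTE ji) mul0r addr0.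
have between_t : 2 <= sgnz s * sdeg m j ->
    forall v, between (stub_deg t v + stub_deg t v) (sdeg m v).
  move=> ge2 v; rewrite /stub_deg /=; case: (eqVneq j v) => [<-|_]; last first.
    by rewrite mul0r addr0 between0.
  by rewrite mul1r between_sgnz2.
have [loop|not_loop] := eqVneq (other_stub t x).1 j.
  have t' : other_stub t x = t.
    have := has_other_stub tx; case: (other_stub t x) loop => _ s' /= -> ts'.
    by rewrite /t (pure_stub_sign pure mx tx mx ts').
  have deg_x v : edge_deg x v = stub_deg t v + stub_deg t v.
    by rewrite (edge_deg_other _ tx) t'.
  apply: (drop_step adm mx); rewrite ?deg_x ?t_i // => v.
  rewrite deg_x stub_deg_pair_even //= between_t //.
  have := pure_sdeg_ge pure m_ge0 mx tx; rewrite deg_x /stub_deg /= eqxx mul1r.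
  by rewrite mulrDr sgnz_sqr; lia.
have [f [tf m_xf ge2]] := second_stub pure m_ge0 mx tx not_loop (m_even j).
exact: (splice_step adm tx tf _ m_xf t_i (between_t ge2) IH).
Qed.

Lemma terminal_step m :
  admissible m -> (forall x, 0 < m x -> x.2.1.1 = i /\ x.2.2.1 = i) ->
  exists W, swap_part m W.
Proof.
move=> [m_ge0 m_even m_i] at_i.
have [x _ /(mul_gt0_factors (m_ge0 x))[mx deg_x_i]] := sum_gt0_witness m_i.
have deg_x v : edge_deg x v = 2 * (i == v)%:R.
  move: (at_i x mx) deg_x_i.
  case: x {mx} => l [[a sa] [b sb]] [/= -> ->].
  by rewrite /edge_deg /stub_deg /= eqxx; case: sa; case: sb; case: (i == v).
exists (munit x); split=> [y||v]; rewrite /sdeg ?mweight_unit ?deg_x ?eqxx //.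
  by rewrite ffunE; have := m_ge0 y; case: eqP => [->|_] /=; lia.
case: (eqVneq i v) => [<-|_] /=; last by rewrite mulr0 between0.
by move: m_i (m_even i); rewrite /between /sdeg; lia.
Qed.

(* Two opposite stubs at a vertex are spliced
   (or a loop carrying both is dropped) without changing signed degrees; once
   every vertex is pure, two stubs at a vertex other than [i] are spliced (or a
   loop dropped); in the end only loops with two positive stubs at [i] are left,
   and any one of them is a swap part.  Swap parts lift back through each step. *)
Lemma exists_swap_part m : admissible m -> exists W, swap_part m W.
Proof.
have [N] := ubnP `|msize m|%N; elim: N m => // N IH m size_m adm.
have below : solvable_below m.
  move=> m' adm' lt_m'; have [m'_ge0 _ _] := adm'; apply: IH adm'.
  have : 0 <= msize m' by apply: sumr_ge0 => x _; rewrite mulr1.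
  by move: size_m lt_m'; lia.
have [[j mixed]|no_mixed] := pselect (exists j, mixed_at m j).
  exact: mixed_step adm mixed below.
have pure v : ~ mixed_at m v by move=> mixed; apply: no_mixed; exists v.
have [[x [t [mx tx ti]]]|at_i] :=
  pselect (exists x t, [/\ 0 < m x, has_stub t x & t.1 != i]).
  by case: t tx ti => j s tx ji; apply: pure_step adm pure mx tx ji below.
apply: terminal_step => // x mx; split; apply/eqP/negPn/negP => not_i; apply: at_i.
  by exists x, x.2.1; rewrite /has_stub eqxx.
by exists x, x.2.2; rewrite /has_stub eqxx orbT.
Qed.

End SignedMultigraph.

Lemma sum_supported2 (T : nmodType) (I : finType) (F : I -> T) p1 p2 :
  p1 != p2 -> (forall p, p != p1 -> p != p2 -> F p = 0) ->
  \sum_p F p = F p1 + F p2.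
Proof.
move=> p12 F0; rewrite (bigD1 p1) //= (bigD1 p2) 1?eq_sym //= big1 ?addr0 //.
by move=> p /andP[p_2 p_1]; apply: F0.
Qed.

Section Incidence.
Variables (m n : nat) (M : 'M[int]_(m, n)) (u w : 'I_n -> 'I_m).
Hypothesis Mdef : forall v j, M v j = (u j == v)%:R + (w j == v)%:R.

Definition ends (j : 'I_n) (s : bool) := ((u j, s), (w j, s)).

Lemma ends_neq j : ends j true != ends j false.
Proof. by rewrite /ends !xpair_eqE andbF. Qed.

Lemma edge_deg_ends j s v : edge_deg (j, ends j s) v = sgnz s * M v j.
Proof. by rewrite Mdef /edge_deg /stub_deg /=; ring. Qed.

Definition ends_supported (W : {ffun 'I_n * (('I_m * bool) * ('I_m * bool)) -> int}) :=
  forall x, x.2 != ends x.1 true -> x.2 != ends x.1 false -> W x = 0.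

Lemma sdeg_ends W v : ends_supported W ->
  sdeg W v = (M *m \col_j (W (j, ends j true) - W (j, ends j false))) v ord0.
Proof.
move=> W_ends; rewrite mxE /sdeg /mweight.
have -> : \sum_x W x * edge_deg x v
         = \sum_j \sum_(p : ('I_m * bool) * ('I_m * bool)) W (j, p) * edge_deg (j, p) v.
  by rewrite pair_bigA; apply: eq_bigr => -[].
apply: eq_bigr => j _; rewrite mxE (sum_supported2 (ends_neq j)).
  by rewrite !edge_deg_ends /=; ring.
by move=> p p_t p_f; rewrite W_ends ?mul0r.
Qed.

(* The edges of [a] get two positive stubs and those of [b] two negative ones,
   so that signed degrees become the degrees of [a - b]. *)
Lemma exchange (a b : 'cV[int]_n) (i : 'I_m) :
  (forall j, 0 <= a j ord0) -> (forall j, 0 <= b j ord0) ->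
  (forall v, (2 %| (M *m (a - b)) v ord0)%Z) -> 0 < (M *m (a - b)) i ord0 ->
  exists a' b' : 'cV[int]_n,
    [/\ a' + b' = a + b, forall j, 0 <= a' j ord0, forall j, 0 <= b' j ord0,
        (M *m (a - a')) i ord0 = 2 &
        forall v, (2 %| (M *m (a - a')) v ord0)%Z &&
                  between ((M *m (a - a')) v ord0) ((M *m (a - b)) v ord0)].
Proof.
move=> a_ge0 b_ge0 even_ab pos_ab.
pose mab : {ffun 'I_n * _ -> int} := [ffun x => if x.2 == ends x.1 true then a x.1 ord0
  else if x.2 == ends x.1 false then b x.1 ord0 else 0].
have mab_ends : ends_supported mab.
  by move=> x xt xf; rewrite ffunE (negbTE xt) (negbTE xf).
have mabE j : (mab (j, ends j true) = a j ord0) * (mab (j, ends j false) = b j ord0).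
  by rewrite !ffunE /= eqxx eq_sym (negbTE (ends_neq j)) eqxx.
have deg_mab v : sdeg mab v = (M *m (a - b)) v ord0.
  rewrite sdeg_ends //; congr ((M *m _) v ord0).
  by apply/matrixP => j k; rewrite !mxE ord1 !mabE.
have [W [W_le W_i W_v]] : exists W, swap_part i mab W.
  apply: exists_swap_part; split=> [x|v|]; rewrite ?deg_mab //.
  by rewrite ffunE; case: ifP => _; last case: ifP => _.
have W_ends : ends_supported W.
  move=> x xt xf; have := W_le x; rewrite (mab_ends x xt xf) => /andP[lo hi].
  by apply/eqP; rewrite eq_le hi lo.
have W_ge0 x : 0 <= W x by case/andP: (W_le x).
have W_le_a j : W (j, ends j true) <= a j ord0.
  by rewrite -mabE; case/andP: (W_le (j, ends j true)).
have W_le_b j : W (j, ends j false) <= b j ord0.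
  by rewrite -mabE; case/andP: (W_le (j, ends j false)).
pose d := \col_j (W (j, ends j true) - W (j, ends j false)).
have deg_W v : sdeg W v = (M *m d) v ord0 by rewrite sdeg_ends.
exists (a - d), (b + d); split => [|j|j||v].
- by rewrite addrACA addNr addr0.
- by rewrite !mxE subr_ge0 lerBlDr (le_trans (W_le_a j)) ?lerDl ?W_ge0.
- by rewrite !mxE addrA subr_ge0 (le_trans (W_le_b j)) ?lerDl ?W_ge0.
- by rewrite opprB addrC subrK -deg_W.
- by rewrite opprB addrC subrK -deg_W -deg_mab.
Qed.

End Incidence.

(** * Linear programs over a finite set *)

Section FiniteLP.
Variables (R : realFieldType) (S : finType) (K : Type).
Variables (row : K -> S -> R) (rhs : K -> R) (obj : S -> R).

Definition feasible (la : S -> R) :=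
  [/\ forall s, 0 <= la s, \sum_s la s = 1 & forall k, \sum_s la s * row k s = rhs k].
Definition objective (la : S -> R) := \sum_s la s * obj s.
Definition support (la : S -> R) := [set s | la s != 0].
Definition kernel_on (la nu : S -> R) :=
  [/\ forall s, la s = 0 -> nu s = 0, \sum_s nu s = 0 & forall k, \sum_s nu s * row k s = 0].
Definition basic (la : S -> R) :=
  feasible la /\ forall nu, kernel_on la nu -> forall s, nu s = 0.

Lemma sum_add_scaled (la nu F : S -> R) t :
  \sum_s (la s + t * nu s) * F s = \sum_s la s * F s + t * \sum_s nu s * F s.
Proof. by rewrite mulr_sumr -big_split /=; apply: eq_bigr => s _; ring. Qed.

Lemma sum_add_scaled1 (la nu : S -> R) t :
  \sum_s (la s + t * nu s) = \sum_s la s + t * \sum_s nu s.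
Proof. by rewrite mulr_sumr -big_split. Qed.

Lemma kernel_descent_dir la nu s1 : kernel_on la nu -> nu s1 != 0 ->
  exists nu', [/\ kernel_on la nu', \sum_s nu' s * obj s <= 0 & exists s, nu' s < 0].
Proof.
move=> [nu_supp nu_sum nu_row] nu_s1.
pose sg : R := if \sum_s nu s * obj s <= 0 then 1 else -1.
have sg_sum (F : S -> R) : \sum_s sg * nu s * F s = sg * \sum_s nu s * F s.
  by rewrite mulr_sumr; apply: eq_bigr => s _; rewrite mulrA.
exists (fun s => sg * nu s); split.
- split=> [s la_s||k]; first by rewrite (nu_supp _ la_s) mulr0.
    by rewrite -mulr_sumr nu_sum mulr0.
  by rewrite sg_sum nu_row mulr0.
- rewrite sg_sum /sg; case: ifP => [le0|/negbT]; first by rewrite mul1r.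
  by rewrite mulN1r oppr_le0 -ltNge => /ltW.
case: (pselect (exists s, sg * nu s < 0)) => // all_ge0.
have nu_ge0 s : 0 <= sg * nu s by rewrite leNgt; apply/negP => ?; apply: all_ge0; exists s.
have := psumr_eq0P (fun s _ => nu_ge0 s) _ (isT : predT s1).
rewrite -mulr_sumr nu_sum mulr0 => /(_ erefl)/eqP; rewrite mulf_eq0 (negbTE nu_s1) orbF.
by rewrite /sg; case: ifP => _; rewrite ?oppr_eq0 oner_eq0.
Qed.

Lemma kernel_step la nu : feasible la -> kernel_on la nu ->
  \sum_s nu s * obj s <= 0 -> (exists s, nu s < 0) ->
  exists la', [/\ feasible la', support la' \proper support la
                 & objective la' <= objective la].
Proof.
move=> [la_ge0 la_sum la_row] [nu_supp nu_sum nu_row] nu_cost [s0 nu_s0].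
pose ratio s := la s / - nu s.
have [s1 nu_s1 ratio_min] : exists2 s1, nu s1 < 0 & forall s, nu s < 0 -> ratio s1 <= ratio s.
  by case: (@arg_minP _ _ _ s0 (fun s => nu s < 0) ratio nu_s0) => s1; exists s1.
pose t := ratio s1.
have t_ge0 : 0 <= t by rewrite divr_ge0 // oppr_ge0 ltW.
exists (fun s => la s + t * nu s); split.
- split=> [s||k]; rewrite ?sum_add_scaled1 ?sum_add_scaled ?la_sum ?la_row ?nu_sum ?nu_row.
  + have [nu_neg|nu_ge0] := ltP (nu s) 0; last first.
      exact: addr_ge0 (la_ge0 s) (mulr_ge0 t_ge0 nu_ge0).
    have := ratio_min s nu_neg; rewrite /ratio ler_pdivlMr ?oppr_gt0 // -/t.
    by rewrite -subr_ge0 mulrN opprK addrC.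
  + by rewrite mulr0 addr0.
  + by rewrite mulr0 addr0.
- apply/fintype.properP; split.
    apply/fintype.subsetP => s; rewrite !inE; apply: contra => /eqP la_s.
    by rewrite la_s (nu_supp _ la_s) mulr0 addr0.
  exists s1; rewrite !inE.
    by apply/eqP => la_s1; move: nu_s1; rewrite (nu_supp _ la_s1) ltxx.
  by rewrite negbK /t /ratio; apply/eqP; field; rewrite lt_eqF.
- by rewrite /objective sum_add_scaled gerDl mulr_ge0_le0.
Qed.

Lemma exists_basic la : feasible la ->
  exists la', basic la' /\ objective la' <= objective la.
Proof.
have [N] := ubnP #|support la|; elim: N la => // N IH la lt_la feas_la.
have [[nu [ker_nu [s nu_s]]]|basic_la] :=
  pselect (exists nu, kernel_on la nu /\ exists s, nu s != 0).
  have [nu' [ker' cost' neg']] := kernel_descent_dir ker_nu nu_s.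
  have [la' [feas' sub' obj']] := kernel_step feas_la ker' cost' neg'.
  have [la'' [basic'' obj'']] := IH la' (leq_trans (proper_card sub') lt_la) feas'.
  by exists la''; split => //; apply: le_trans obj''  obj'.
exists la; split=> //; split=> // nu ker_nu s; apply/eqP/negPn/negP => nu_s.
by apply: basic_la; exists nu; split => //; exists s.
Qed.

Lemma basic_unique la mu : basic la -> feasible mu -> support mu = support la ->
  forall s, mu s = la s.
Proof.
move=> [[_ la_sum la_row] la_basic] [_ mu_sum mu_row] supp_eq s; apply/eqP.
rewrite -subr_eq0; apply/eqP; apply: (la_basic (fun s => mu s - la s)); split.
- move=> s' la_s'; rewrite la_s' subr0.
  have : s' \notin support la by rewrite inE negbK la_s'.
  by rewrite -supp_eq inE negbK => /eqP.
- by rewrite sumrB mu_sum la_sum subrr.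
- by move=> k; under eq_bigr do rewrite mulrBl; rewrite sumrB mu_row la_row subrr.
Qed.

(* A basic solution is determined by its support, so the best basic solution
   exists, and it beats every feasible point by [exists_basic]. *)
Lemma feasible_argmin la0 : feasible la0 ->
  exists2 la, feasible la & forall mu, feasible mu -> objective la <= objective mu.
Proof.
move=> feas0.
have pick_ex T : exists la, (exists la, basic la /\ support la = T) ->
                             basic la /\ support la = T.
  have [[la la_T]|none] := pselect (exists la, basic la /\ support la = T).
    by exists la.
  by exists la0 => ex; case: none.
have [pick pickP] := choice pick_ex.
have [la1 [basic1 _]] := exists_basic feas0.
pose reachable T := `[< exists la, basic la /\ support la = T >].
have reach1 : reachable (support la1) by apply/asboolP; exists la1.
have [T /asboolP reachT T_min] := arg_minP (fun T => objective (pick T)) reach1.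
have [basicT suppT] := pickP T reachT.
exists (pick T); first by case: basicT.
move=> mu feas_mu; have [mu' [basic' obj']] := exists_basic feas_mu.
have reach' : reachable (support mu') by apply/asboolP; exists mu'.
apply: le_trans (T_min _ reach') _; have [pick_basic pick_supp] := pickP _ (asboolW reach').
rewrite /objective; under eq_bigr do rewrite (basic_unique basic' pick_basic.1 pick_supp).
exact: obj'.
Qed.

Lemma sum_dirac (F : S -> R) a : \sum_s (s == a)%:R * F s = F a.
Proof.
rewrite (bigD1 a) //= eqxx mul1r big1 ?addr0 // => s /negbTE->.
by rewrite mul0r.
Qed.

Lemma feasible_swap la a b a' b' :
  feasible la -> 0 < la a -> 0 < la b -> a != b ->
  (forall k, row k a' + row k b' = row k a + row k b) ->
  obj a' + obj b' < obj a + obj b ->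
  exists2 la', feasible la' & objective la' < objective la.
Proof.
move=> [la_ge0 la_sum la_row] la_a la_b ab rows objs.
pose t := Num.min (la a) (la b).
pose added s : R := (s == a')%:R + (s == b')%:R.
pose removed s : R := (s == a)%:R + (s == b)%:R.
have sumE (F : S -> R) :
    \sum_s (added s - removed s) * F s = F a' + F b' - (F a + F b).
  under eq_bigr do rewrite mulrBl !mulrDl.
  by rewrite sumrB !big_split /= !sum_dirac.
have sum1E : \sum_s (added s - removed s) = 0.
  transitivity (\sum_s (added s - removed s) * 1); last by rewrite sumE subrr.
  by apply: eq_bigr => s _; rewrite mulr1.
exists (fun s => la s + t * (added s - removed s)).
  split=> [s||k]; rewrite ?sum_add_scaled1 ?sum_add_scaled ?la_sum ?la_row ?sum1E.
  - have t_removed : t * removed s <= la s.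
      rewrite /removed /t; case: (eqVneq s a) => [->|_].
        by rewrite (negbTE ab) addr0 mulr1 ge_min lexx.
      case: (eqVneq s b) => [->|_]; first by rewrite add0r mulr1 ge_min lexx orbT.
      by rewrite addr0 mulr0.
    have t_added : 0 <= t * added s by rewrite mulr_ge0 ?addr_ge0 // le_min !ltW.
    by rewrite mulrBr addrA addrAC addr_ge0 // subr_ge0.
  - by rewrite mulr0 addr0.
  - by rewrite sumE rows subrr mulr0 addr0.
rewrite /objective sum_add_scaled sumE gtrDl pmulr_rlt0 ?subr_lt0 //.
by rewrite lt_min la_a la_b.
Qed.

End FiniteLP.

Section Distributions.
Variables (R : realDomainType) (S : finType) (la : S -> R).
Hypothesis la_ge0 : forall s, 0 <= la s.

Lemma support_neg_witness (h : S -> R) s1 :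
  \sum_s la s * h s = 0 -> 0 < la s1 -> 0 < h s1 -> exists2 b, 0 < la b & h b < 0.
Proof.
move=> sum0 la_s1 h_s1.
rewrite (bigD1 s1) //= in sum0.
have : 0 < \sum_(s | s != s1) - (la s * h s).
  by rewrite sumrN; have := mulr_gt0 la_s1 h_s1; lra.
case/sum_gt0_witness => b _; rewrite -mulrN => /(mul_gt0_factors (la_ge0 b))[la_b].
by rewrite oppr_gt0 => h_b; exists b.
Qed.

Lemma support_straddle (h : S -> R) s1 :
  \sum_s la s * h s = 0 -> 0 < la s1 -> h s1 != 0 ->
  exists a b, [/\ 0 < la a, 0 < la b & h b < 0 < h a].
Proof.
move=> sum0 la_s1; rewrite neq_lt => /orP[neg|pos].
  have sumN : \sum_s la s * - h s = 0.
    by under eq_bigr do rewrite mulrN; rewrite sumrN sum0 oppr0.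
  have negN : 0 < - h s1 by rewrite oppr_gt0.
  have [a la_a] := support_neg_witness sumN la_s1 negN.
  by rewrite oppr_lt0 => h_a; exists a, s1; rewrite neg h_a.
have [b la_b h_b] := support_neg_witness sum0 la_s1 pos.
by exists s1, b; rewrite h_b pos.
Qed.

Lemma exists_le_mean (h : S -> R) :
  \sum_s la s = 1 -> exists2 s, 0 < la s & h s <= \sum_s la s * h s.
Proof.
move=> sum1; set mu := \sum_s la s * h s.
have [s0 _ la_s0] : exists2 s, true & 0 < la s.
  by apply: sum_gt0_witness; rewrite sum1 ltr01.
have [le_s0|gt_s0] := leP (h s0) mu; first by exists s0.
have sum0 : \sum_s la s * (h s - mu) = 0.
  by under eq_bigr do rewrite mulrBr; rewrite sumrB -mulr_suml sum1 mul1r subrr.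
have pos_s0 : 0 < h s0 - mu by rewrite subr_gt0.
have [b la_b] := support_neg_witness sum0 la_s0 pos_s0.
by rewrite subr_lt0 => /ltW; exists b.
Qed.

End Distributions.

(** * Parity-convexity of the minimum-cost z-matching function *)

Section BoundedSolutions.
Variables (m n : nat) (M : 'M[int]_(m, n)) (u w : 'I_n -> 'I_m) (r : 'cV[int]_m) (D : nat).
Hypothesis Mdef : forall v j, M v j = (u j == v)%:R + (w j == v)%:R.

(* Every solution whose degrees are at most [D] lies in [box] by [entry_le_deg],
   which makes [sol] a finite type. *)
Definition box := {ffun 'I_n -> 'I_D.+1}.
Definition boxvec (s : box) : 'cV[int]_n := \col_j (s j : nat)%:Z.
Definition parity_bounded (s : box) :=
  [forall v, ((M *m boxvec s) v ord0 <= D%:Z)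
             && ((M *m boxvec s) v ord0 == r v ord0 %[mod 2])%Z].
Definition sol := {s : box | parity_bounded s}.
Definition solvec (s : sol) := boxvec (val s).

Lemma solvec_ge0 s j : 0 <= solvec s j ord0.
Proof. by rewrite mxE. Qed.

Lemma sol_deg_le s v : (M *m solvec s) v ord0 <= D%:Z.
Proof. by have /forallP/(_ v)/andP[] := valP s. Qed.

Lemma sol_deg_mod s v : ((M *m solvec s) v ord0 == r v ord0 %[mod 2])%Z.
Proof. by have /forallP/(_ v)/andP[] := valP s. Qed.

Lemma entry_le_deg (x : 'cV[int]_n) j :
  (forall j, 0 <= x j ord0) -> x j ord0 <= (M *m x) (u j) ord0.
Proof.
move=> x_ge0; rewrite mxE (bigD1 j) //= Mdef eqxx.
have rest_ge0 : 0 <= \sum_(k | k != j) M (u j) k * x k ord0.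
  by apply: sumr_ge0 => k _; rewrite mulr_ge0 // Mdef addr_ge0.
by rewrite -[X in X <= _]addr0 lerD // ler_peMl // lerDl.
Qed.

Lemma sol_of_vec (x : 'cV[int]_n) : (forall j, 0 <= x j ord0) ->
  (forall v, (M *m x) v ord0 <= D%:Z) ->
  (forall v, ((M *m x) v ord0 == r v ord0 %[mod 2])%Z) ->
  exists s : sol, solvec s = x.
Proof.
move=> x_ge0 x_le x_mod.
have boxvecK : boxvec [ffun j => inord `|x j ord0|%N] = x.
  apply/matrixP => j k; rewrite (ord1 k) !mxE ffunE inordK ?gez0_abs //.
  by have := entry_le_deg j x_ge0; have := x_le (u j); have := x_ge0 j; lia.
have bounded_x : parity_bounded [ffun j => inord `|x j ord0|%N].
  by apply/forallP => v; rewrite boxvecK x_le x_mod.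
by exists (Sub _ bounded_x).
Qed.

End BoundedSolutions.

Section ParityConvexity.
Variables (R : realType) (m n : nat) (M : 'M[int]_(m, n)) (u w : 'I_n -> 'I_m).
Variables (c : 'cV[int]_n) (r z : 'cV[int]_m) (D : nat).
Hypothesis Mdef : forall v j, M v j = (u j == v)%:R + (w j == v)%:R.
Hypothesis z_r : forall v, (z v ord0 == r v ord0 %[mod 2])%Z.

Local Notation sol := (sol M r D).
Local Notation deg s v := ((M *m solvec s) v ord0).

Definition cost (s : sol) : int := (c^T *m solvec s) 0 0.

Definition representable (y : 'cV[int]_m) :=
  exists x : 'cV[int]_n, M *m x = y /\ forall j, 0 <= x j ord0.

Lemma fcM_le (x : 'cV[int]_n) :
  (forall j, 0 <= x j ord0) -> (fcM R c M (M *m x) <= ((c^T *m x) 0 0)%:~R%:E)%E.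
Proof. by move=> x_ge0; apply: ereal_inf_lbound; exists x. Qed.

Lemma fcM_infeasible y : ~ representable y -> fcM R c M y = +oo%E.
Proof. by move=> none; apply/ereal_inf_pinfty => e [x [Mx x_ge0] _]; case: none; exists x. Qed.

Lemma fcM_attained (y : 'cV[int]_m) :
  (forall v, y v ord0 <= D%:Z) -> (forall v, (y v ord0 == r v ord0 %[mod 2])%Z) ->
  representable y -> exists2 s : sol, M *m solvec s = y & fcM R c M y = (cost s)%:~R%:E.
Proof.
move=> y_le y_mod [x0 [Mx0 x0_ge0]].
have sol_y x : M *m x = y -> (forall j, 0 <= x j ord0) -> exists s : sol, solvec s = x.
  by move=> Mx x_ge0; apply: (sol_of_vec Mdef x_ge0) => v; rewrite Mx.
have [s0 s0E] := sol_y x0 Mx0 x0_ge0.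
have Ps0 : M *m solvec s0 == y by rewrite s0E Mx0.
have [s /eqP Ms s_min] := @arg_minP _ _ _ s0 (fun s => M *m solvec s == y) cost Ps0.
exists s => //; apply/eqP; rewrite eq_le -{1}Ms (fcM_le (solvec_ge0 s)) /=.
apply: le_ereal_inf_tmp => _ [x [Mx x_ge0] <-].
have [s' s'E] := sol_y x Mx x_ge0.
by rewrite lee_fin ler_int -s'E; apply: s_min; rewrite s'E Mx.
Qed.

Lemma sol_exchange (a b : sol) i : deg b i < deg a i ->
  exists a' b' : sol, [/\ solvec a' + solvec b' = solvec a + solvec b,
     (M *m (solvec a - solvec a')) i ord0 = 2 &
     forall v, (2 %| (M *m (solvec a - solvec a')) v ord0)%Z &&
               between ((M *m (solvec a - solvec a')) v ord0) (deg a v - deg b v)].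
Proof.
move=> lt_ab.
have even_ab v : (2 %| (M *m (solvec a - solvec b)) v ord0)%Z.
  by rewrite mulmxB_entry; have := sol_deg_mod a v; have := sol_deg_mod b v; lia.
have pos_ab : 0 < (M *m (solvec a - solvec b)) i ord0 by rewrite mulmxB_entry subr_gt0.
have [a' [b' [sum_ab a'_ge0 b'_ge0 d_i d_v]]] :=
  exchange Mdef (solvec_ge0 a) (solvec_ge0 b) even_ab pos_ab.
have a'_deg v : (M *m a') v ord0 = deg a v - (M *m (solvec a - a')) v ord0.
  by rewrite mulmxB_entry opprB addrC subrK.
have b'_deg v : (M *m b') v ord0 = deg b v + (M *m (solvec a - a')) v ord0.
  by rewrite (addr_swap_eq sum_ab) [LHS]mulmxD_entry.
have [sa' sa'E] : exists s : sol, solvec s = a'.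
  apply: (sol_of_vec Mdef a'_ge0) => v; rewrite a'_deg;
    move: (d_v v); rewrite !mulmxB_entry /between;
    have := sol_deg_le a v; have := sol_deg_le b v; have := sol_deg_mod a v; lia.
have [sb' sb'E] : exists s : sol, solvec s = b'.
  apply: (sol_of_vec Mdef b'_ge0) => v; rewrite b'_deg;
    move: (d_v v); rewrite !mulmxB_entry /between;
    have := sol_deg_le a v; have := sol_deg_le b v; have := sol_deg_mod b v; lia.
exists sa', sb'; rewrite sa'E sb'E; split=> // v.
by rewrite -mulmxB_entry.
Qed.

Definition defect (s : sol) : int := \sum_v (deg s v - z v ord0) ^+ 2.

Lemma defect_exchange (a b a' b' : sol) i :
  deg b i < z i ord0 < deg a i ->
  solvec a' + solvec b' = solvec a + solvec b ->
  (M *m (solvec a - solvec a')) i ord0 = 2 ->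
  (forall v, between ((M *m (solvec a - solvec a')) v ord0) (deg a v - deg b v)) ->
  defect a' + defect b' < defect a + defect b.
Proof.
move=> /andP[b_i a_i] sum_ab d_i d_v.
have a'_deg v : deg a' v = deg a v - (M *m (solvec a - solvec a')) v ord0.
  by rewrite mulmxB_entry opprB addrC subrK.
have b'_deg v : deg b' v = deg b v + (M *m (solvec a - solvec a')) v ord0.
  by rewrite (addr_swap_eq sum_ab) [LHS]mulmxD_entry.
rewrite /defect -!big_split /= (bigD1 i) //= [X in _ < X](bigD1 i) //=.
apply: ltr_leD.
  rewrite a'_deg b'_deg d_i; apply: sq_exchange_lt.
    by have := sol_deg_mod a i; have := z_r i; lia.
  by have := sol_deg_mod b i; have := z_r i; lia.
by apply: ler_sum => v _; rewrite a'_deg b'_deg sq_exchange_le.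
Qed.

Lemma defect_ge0 s : 0 <= defect s.
Proof. by apply: sumr_ge0 => v _; rewrite sqr_ge0. Qed.

Lemma defect_eq0 s : defect s = 0 -> M *m solvec s = z.
Proof.
move=> /eqP; rewrite psumr_eq0 => [/allP zero|v _]; last by rewrite sqr_ge0.
apply/matrixP => v k; rewrite (ord1 k); apply/eqP; rewrite -subr_eq0 -sqrf_eq0.
exact: (implyP (zero v (mem_index_enum v))).
Qed.

Definition sol_row (k : option 'I_m) (s : sol) : R :=
  if k is Some v then (deg s v)%:~R else (cost s)%:~R.
Definition sol_rhs (C : R) (k : option 'I_m) : R :=
  if k is Some v then (z v ord0)%:~R else C.
Definition defectR (s : sol) : R := (defect s)%:~R.

Lemma defect_descent C la :
  feasible sol_row (sol_rhs C) la -> 0 < objective defectR la ->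
  exists2 la', feasible sol_row (sol_rhs C) la' & objective defectR la' < objective defectR la.
Proof.
move=> feas pos; have [la_ge0 la_sum la_row] := feas.
have [s1 _ /(mul_gt0_factors (la_ge0 s1))[la_s1 defect_s1]] := sum_gt0_witness pos.
have [i i_off] : exists i, deg s1 i != z i ord0.
  case: (pselect (exists i, deg s1 i != z i ord0)) => // all_eq.
  move: defect_s1; rewrite /defectR /defect big1 ?ltxx // => v _.
  suff -> : deg s1 v = z v ord0 by rewrite subrr expr0n.
  by apply/eqP/negPn/negP => ne; apply: all_eq; exists v.
have sum_i : \sum_s la s * ((deg s i)%:~R - (z i ord0)%:~R : R) = 0.
  under eq_bigr do rewrite mulrBr.
  by rewrite sumrB (la_row (Some i)) -mulr_suml la_sum mul1r subrr.
have [|a [b [la_a la_b]]] := support_straddle la_ge0 sum_i la_s1.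
  by rewrite subr_eq0 eqr_int.
rewrite subr_lt0 subr_gt0 !ltr_int => /andP[b_i a_i].
have [a' [b' [sum_ab d_i d_v]]] := sol_exchange (lt_trans b_i a_i).
apply: (feasible_swap (a' := a') (b' := b') feas la_a la_b).
- by apply: contraTneq a_i => ->; rewrite -leNgt ltW.
- case=> [v|] /=; rewrite -!intrD.
    by rewrite -!mulmxD_entry sum_ab.
  by rewrite /cost -!mulmxD_entry sum_ab.
- rewrite /defectR -!intrD ltr_int (defect_exchange (i := i)) //; first by rewrite b_i a_i.
  by move=> v; case/andP: (d_v v).
Qed.

Lemma exists_sol_le_mean C la0 : feasible sol_row (sol_rhs C) la0 ->
  exists2 s : sol, M *m solvec s = z & (cost s)%:~R <= C.
Proof.
move=> feas0; have [la feas la_min] := feasible_argmin defectR feas0.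
have [la_ge0 la_sum la_row] := feas.
have term_ge0 s : 0 <= la s * defectR s by rewrite mulr_ge0 // ler0z defect_ge0.
have obj0 : objective defectR la = 0.
  apply/eqP; rewrite eq_le sumr_ge0 // andbT leNgt; apply/negP => pos.
  have [la' feas' lt'] := defect_descent feas pos.
  by move: (la_min _ feas'); rewrite leNgt lt'.
have [s la_s cost_s] := exists_le_mean la_ge0 (fun s => (cost s)%:~R) la_sum.
exists s; last by move: cost_s; rewrite (la_row None).
apply: defect_eq0; move: obj0; rewrite /objective => /psumr_eq0P.
move=> /(_ (fun s _ => term_ge0 s) s isT).
by move=> /eqP; rewrite mulf_eq0 (gt_eqF la_s) intr_eq0 => /eqP.
Qed.

Lemma fcM_neq_ninfty (y : 'cV[int]_m) : (forall v, y v ord0 <= D%:Z) ->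
  (forall v, (y v ord0 == r v ord0 %[mod 2])%Z) -> fcM R c M y != -oo%E.
Proof.
move=> y_le y_mod.
have [feas|infeas] := pselect (representable y).
  by have [s _ ->] := fcM_attained y_le y_mod feas.
by rewrite fcM_infeasible.
Qed.

Lemma exists_sol_le_combination l (lam : 'I_l -> R) (X : 'I_l -> sol) :
  (forall k, 0 <= lam k) -> \sum_k lam k = 1 ->
  (forall v, (z v ord0)%:~R = \sum_k lam k * (deg (X k) v)%:~R) ->
  exists2 s : sol, M *m solvec s = z & (cost s)%:~R <= \sum_k lam k * (cost (X k))%:~R.
Proof.
move=> lam_ge0 lam_sum z_mean.
pose la0 (s : sol) := \sum_(k | X k == s) lam k.
have pushE (F : sol -> R) : \sum_s la0 s * F s = \sum_k lam k * F (X k).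
  rewrite (partition_big X predT) //=; apply: eq_bigr => s _.
  by rewrite mulr_suml; apply: eq_bigr => k /eqP->.
apply: (exists_sol_le_mean (la0 := la0)); split=> [s||[v|]]; rewrite /= ?pushE ?z_mean //.
- exact: sumr_ge0.
- transitivity (\sum_s la0 s * 1); first by apply: eq_bigr => s _; rewrite mulr1.
  by rewrite pushE -[RHS]lam_sum; apply: eq_bigr => k _; rewrite mulr1.
Qed.

Lemma exists_optimal_sols l (zs : 'I_l -> 'cV[int]_m) (lam : 'I_l -> R) :
  (forall k v, (zs k v ord0 == r v ord0 %[mod 2])%Z) -> (forall k v, zs k v ord0 <= D%:Z) ->
  (exists k, 0 < lam k) -> (forall k, 0 < lam k -> representable (zs k)) ->
  exists X : 'I_l -> sol, forall k, 0 < lam k ->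
    M *m solvec (X k) = zs k /\ fcM R c M (zs k) = (cost (X k))%:~R%:E.
Proof.
move=> zs_r zs_D [k1 lam_k1] feas.
have attained k : 0 < lam k ->
    exists2 s : sol, M *m solvec s = zs k & fcM R c M (zs k) = (cost s)%:~R%:E.
  by move=> lam_k; apply: fcM_attained (zs_D k) (zs_r k) (feas k lam_k).
have [s1 _ _] := attained k1 lam_k1.
have pick k : exists s : sol, 0 < lam k ->
    M *m solvec s = zs k /\ fcM R c M (zs k) = (cost s)%:~R%:E.
  have [lam_k|_] := boolP (0 < lam k); last by exists s1.
  by have [s Ms fs] := attained k lam_k; exists s.
by have [X XP] := choice pick; exists X.
Qed.

Lemma fcM_parity_convex l (zs : 'I_l -> 'cV[int]_m) (lam : 'I_l -> R) :
  (forall k v, (zs k v ord0 == r v ord0 %[mod 2])%Z) -> (forall k v, zs k v ord0 <= D%:Z) ->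
  (forall k, 0 <= lam k) -> \sum_k lam k = 1 ->
  (forall v, (z v ord0)%:~R = \sum_k lam k * (zs k v ord0)%:~R) ->
  (fcM R c M z <= \sum_k (lam k)%:E * fcM R c M (zs k))%E.
Proof.
move=> zs_r zs_D lam_ge0 lam_sum z_mean.
have [[k lam_k infeas]|all_feas] := pselect (exists2 k, 0 < lam k & ~ representable (zs k)).
  rewrite weighted_esum_pinfty ?leey // => [k'|]; first exact: fcM_neq_ninfty.
  by exists k; rewrite ?fcM_infeasible.
have lam_cases k : lam k = 0 \/ 0 < lam k.
  by have := lam_ge0 k; rewrite le0r => /orP[/eqP|]; [left|right].
have [X XP] : exists X : 'I_l -> sol, forall k, 0 < lam k ->
    M *m solvec (X k) = zs k /\ fcM R c M (zs k) = (cost (X k))%:~R%:E.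
  apply: exists_optimal_sols => // [|k lam_k].
    have [k _ lam_k] : exists2 k, true & 0 < lam k.
      by apply: sum_gt0_witness; rewrite lam_sum ltr01.
    by exists k.
  by apply: contrapT => infeas; apply: all_feas; exists k.
have z_comb v : (z v ord0)%:~R = \sum_k lam k * (deg (X k) v)%:~R.
  rewrite z_mean; apply: eq_bigr => k _.
  by have [->|/XP[-> _]] := lam_cases k; rewrite ?mul0r.
have [s Ms cost_s] := exists_sol_le_combination lam_ge0 lam_sum z_comb.
have -> : (\sum_k (lam k)%:E * fcM R c M (zs k) = (\sum_k lam k * (cost (X k))%:~R)%:E)%E.
  rewrite -sumEFin; apply: eq_bigr => k _.
  by have [->|/XP[_ ->]] := lam_cases k; rewrite ?mul0e ?mul0r // EFinM.
by rewrite -Ms; apply: le_trans (fcM_le (solvec_ge0 s)) _; rewrite lee_fin.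
Qed.

End ParityConvexity.

Lemma incidence_endpoints m n (M : 'M[int]_(m, n)) :
  (forall i j, M i j = 0 \/ M i j = 1) -> (forall j, \sum_(i < m) M i j = 2) ->
  exists u w : 'I_n -> 'I_m, forall v j, M v j = (u j == v)%:R + (w j == v)%:R.
Proof.
move=> M01 Msum.
have col_ends j : exists p : 'I_m * 'I_m, forall v, M v j = (p.1 == v)%:R + (p.2 == v)%:R.
  pose A := [set v | M v j == 1].
  have MA v : M v j = (v \in A)%:R by rewrite inE; case: (M01 v j) => ->.
  have /cards2P[x [y [xy A_xy]]] : #|A| == 2.
    have card_A : \sum_v M v j = #|A|%:R.
      rewrite -sum1_card natr_sum [RHS]big_mkcond; apply: eq_bigr => v _.
      by rewrite MA; case: (v \in A).
    by have := Msum j; rewrite card_A natz => -[->].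
  exists (x, y) => v; rewrite MA A_xy !inE /= (eq_sym x) (eq_sym y).
  by case: (eqVneq v x) => [->|_]; rewrite ?(negbTE xy) /= ?add0r ?addr0.
have [f fP] := choice col_ends.
by exists (fun j => (f j).1), (fun j => (f j).2).
Qed.

Theorem lemma7 (R : realType) (m n l : nat) (M : 'M[int]_(m, n))
  (c : 'cV[int]_n) (r : 'cV[int]_m) (zs : 'I_l -> 'cV[int]_m)
  (lam : 'I_l -> R) (z : 'cV[int]_m) :
  is_simple_incidence_matrix M ->
  (forall k i, ((zs k i ord0) = (r i ord0) %[mod 2%Z])%Z) ->
  (forall k, 0 <= lam k) ->
  \sum_(k < l) lam k = 1 ->
  (forall i, (z i 0)%:~R = \sum_(k < l) lam k * (zs k i 0)%:~R :> R) ->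
  (forall i, ((z i ord0) = (r i ord0) %[mod 2%Z])%Z) ->
  (fcM R c M z <= \sum_(k < l) (lam k)%:E * fcM R c M (zs k))%E.
Proof.
move=> [M01 [Msum _]] zs_r lam_ge0 lam_sum z_mean z_r.
have [u [w Mdef]] := incidence_endpoints M01 Msum.
pose D := \max_(k < l) \max_(v < m) `|zs k v ord0|%N.
have zs_D k v : zs k v ord0 <= D%:Z.
  apply: le_trans (ler_norm _) _; rewrite -abszE lez_nat.
  apply: leq_trans (leq_bigmax (F := fun k => \max_(v < m) `|zs k v ord0|%N) k).
  exact: (leq_bigmax (F := fun v => `|zs k v ord0|%N) v).
apply: (fcM_parity_convex c (r := r) (D := D) Mdef) => // [v|k v].
- by apply/eqP; exact: z_r.
- by apply/eqP; exact: zs_r.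
Qed.
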